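(* Let $p$ be a prime, let $G$ be a finite $p$-group and let $A$ be a non-empty normal subset of $G$ consisting of elements of order $p$. Assume that for all $a\in A$, $a$ centralizes every elementary abelian $p$-subgroup of $G$ which it normalizes. Then $\langle A\rangle$ is an elementary abelian normal subgroup of $G$.
   Context: A normal subset of $G$ is a subset closed under conjugation by elements of $G$. *)

From mathcomp Require Import all_boot all_fingroup all_solvable.

From mathcomp Require Import all_boot all_fingroup all_solvable.
Set Implicit Arguments.
Unset Strict Implicit.
Unset Printing Implicit Defensive.
Local Open Scope group_scope.

(* It suffices to show that A is abelian, by induction on |G|.  For a in A,
   either G = <a> is abelian, or a lies in a maximal subgroup M of G, which is
   normal since G is a p-group.  Then A :&: M is a normal subset of G to which
   the induction hypothesis applies in M, so <<A :&: M>> is an elementary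
   abelian subgroup normalized by all of G; hence every b in A centralizes it,
   and in particular commutes with a. *)

Definition centralizes_normalized_abelem (p : nat) (gT : finGroupType)
    (G A : {set gT}) :=
  forall a, a \in A -> forall E : {group gT},
    E \subset G -> p.-abelem E -> a \in 'N(E) -> a \in 'C(E).

Section NormalSubsetsOfOrderP.

Variables (gT : finGroupType) (p : nat).
Hypothesis p_pr : prime p.

Lemma centralizes_normalized_abelemS (G H A B : {set gT}) :
    H \subset G -> B \subset A ->
  centralizes_normalized_abelem p G A -> centralizes_normalized_abelem p H B.
Proof.
move=> sHG sBA cnA b Bb E sEH.
exact: cnA _ (subsetP sBA b Bb) E (subset_trans sEH sHG).
Qed.

Lemma abelem_gen_order_p (A : {set gT}) :
  {in A, forall a, #[a] = p} -> abelian A -> p.-abelem <<A>>.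
Proof.
move=> oA cAA; rewrite abelemE // abelian_gen cAA abelian_exponent_gen //=.
by apply/exponentP => a Aa; rewrite -(oA a Aa) expg_order.
Qed.

Lemma order_p_normal_subset_abelian (G : {group gT}) (A : {set gT}) :
    p.-group G -> A \subset G -> G \subset 'N(A) ->
    {in A, forall a, #[a] = p} -> centralizes_normalized_abelem p G A ->
  abelian A.
Proof.
elim: {G}_.+1 {-2}G (ltnSn #|G|) A => // n IHn G leGn A pG sAG nAG oA cnA.
have cAM (M : {group gT}) : M \proper G -> abelian (A :&: M).
  move=> ltMG; have sMG := proper_sub ltMG.
  apply: (IHn M) => //.
  - exact: leq_trans (proper_card ltMG) leGn.
  - exact: pgroupS sMG pG.
  - exact: subsetIr.
  - exact: normsI (subset_trans sMG nAG) (normG M).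
  - by move=> a /setIP[Aa _]; apply: oA.
  - exact: centralizes_normalized_abelemS sMG (subsetIl A M) cnA.
apply/centsP => a Aa b Ab.
have [Ga Gb] := (subsetP sAG a Aa, subsetP sAG b Ab).
have sCaG : <[a]> \subset G by rewrite cycle_subG.
have [defG | [M maxM sCaM]] := maximal_exists sCaG.
  have cGG : abelian G by rewrite -defG cycle_abelian.
  exact: (centsP cGG).
have ltMG : M \proper G := maxgroupp maxM.
have nAMG : G \subset 'N(A :&: M).
  exact: normsI nAG (normal_norm (p_maximal_normal pG maxM)).
have cAMb : b \in 'C(<<A :&: M>>).
  apply: cnA Ab _ _ (abelem_gen_order_p _ (cAM M ltMG)) _.
  - by rewrite gen_subG (subset_trans (subsetIr A M)) ?proper_sub.
  - by move=> c /setIP[Ac _]; apply: oA.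
  - exact: subsetP (norms_gen nAMG) b Gb.
apply/esym/(centP cAMb).
by rewrite mem_gen // inE Aa -cycle_subG sCaM.
Qed.

End NormalSubsetsOfOrderP.

Theorem lemma2p4 (gT : finGroupType) (p : nat) (G : {group gT}) (A : {set gT}) :
  prime p -> p.-group G ->
  A \subset G -> A != set0 ->
  (forall g, g \in G -> A :^ g = A) ->
  (forall a, a \in A -> #[a] = p) ->
  (forall a, a \in A -> forall E : {group gT},
      E \subset G -> p.-abelem E -> a \in 'N(E) -> a \in 'C(E)) ->
  p.-abelem <<A>> /\ <<A>> <| G.
Proof.
(* For A = set0 the conclusion holds too: <<set0>> = 1. *)
move=> p_pr pG sAG _ nAG oA cnA.
have nAG' : G \subset 'N(A) by apply/normsP => g /nAG.
have cAA := order_p_normal_subset_abelian p_pr pG sAG nAG' oA cnA.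
split; first exact: abelem_gen_order_p.
by rewrite /normal gen_subG sAG norms_gen.
Qed.
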